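(* Let $w$ be a classical solution of the bounded-domain problem $(P_\Omega)$, smooth enough that $w(\cdot,\cdot,t)$ is smooth on $\overline\Omega$ with derivatives bounded uniformly in $t\in[0,T]$, $u=w^{1/m}|_{y=0}$ is $C^2$ in $t$ and $u^m$ is $C^2$ in $x$ (with bounded derivatives). Let $L^D_\sigma$ be a discretization of $L_\sigma$ of order $a$. Define the local truncation error $(\tau_{j-1})_i^k$ by: $(\tau_{j-1})_i^k=0$ at $\Gamma_h$ nodes; $(\tau_{j-1})_i^k=L^D_\sigma[(w_j)]_i^k$ at interior nodes ($0<i<I$, $0<k<K$); and at base nodes ($0<i<I$, $k=0$) $$(\tau_{j-1})_i^0=\nu_\sigma\frac{\Delta t}{\Delta x^\sigma}\big[(w_{j-1})_i^1-(w_{j-1})_i^0\big]+[(w_{j-1})_i^0]^{1/m}-[(w_j)_i^0]^{1/m},$$ where $(w_j)_i^k=w(x_i,y_k,t_j)$. Then $$\Lambda:=\max_{i,k,j}|(\tau_j)_i^k|=O\big(\Delta t(\Delta x^{2-\sigma}+\Delta t)+\Delta x^a\big).$$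
   Context: Fix $m\ge1$, $\sigma\in(0,2)$, $T>0$, and $0\le f\in L^1\cap L^\infty$. Constants: $\mu_\sigma=2^{\sigma-1}\Gamma(\sigma/2)/\Gamma(1-\sigma/2)$, $\nu_\sigma=\sigma\mu_\sigma$. Operator $L_\sigma v=\nabla\cdot(y^{1-\sigma}\nabla v)$; normalized $\sigma$-derivative $\frac{\partial v}{\partial y^\sigma}(x,0)=\mu_\sigma\lim_{y\to0}y^{1-\sigma}\partial_y v(x,y)$. Domain (written for space dimension $N=1$; higher $N$ is the tensor-product analogue): $\Omega=(-X,X)\times(0,Y)$, $\Gamma_d=[-X,X]\times\{0\}$, $\Gamma_h=\partial\Omega\setminus\Gamma_d$. Problem $(P_\Omega)$: $L_\sigma w=0$ in $\Omega\times(0,T]$; $\partial_t(w^{1/m})=\frac{\partial w}{\partial y^\sigma}$ on $\Gamma_d\times(0,T]$; $w(x,0,0)=f^m(x)$; $w=0$ on $\Gamma_h$. Grid: $\Delta t=T/J$, $t_j=j\Delta t$; $\Delta x=2X/I$, $x_i=i\Delta x-X$; $\Delta y=Y/K$, $y_k=k\Delta y$, with $\Delta y=\Delta x$. Nodes with $i\in\{0,I\}$ or $k=K$ are $\Gamma_h$ nodes; nodes with $k=0$, $0<i<I$ are base nodes; nodes with $0<i<I$, $0<k<K$ are interior nodes. A discretization $L^D_\sigma$ of $L_\sigma$ has order $a$ if $\max_{i,k}|L^D_\sigma v_i^k-L_\sigma v(x_i,y_k)|\le C_v\Delta x^a$ for every sufficiently regular $v$, where $v_i^k=v(x_i,y_k)$.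 *)

From Stdlib Require Import Reals Lra Arith ClassicalEpsilon Factorial.
Open Scope R_scope.

(* ---------- Gamma function (Gauss' limit formula, valid for z > 0) ---------- *)
Fixpoint pochh (z : R) (n : nat) : R :=
  match n with
  | O => z
  | S n' => pochh z n' * (z + INR (S n'))
  end.

Definition gauss_seq (z : R) (n : nat) : R :=
  INR (fact n) * Rpower (INR n) z / pochh z n.

Definition Gamma (z : R) : R :=
  epsilon (inhabits 0) (fun g => Un_cv (gauss_seq z) g).

Definition mu_sigma (sigma : R) : R :=
  Rpower 2 (sigma - 1) * Gamma (sigma / 2) / Gamma (1 - sigma / 2).

Definition nu_sigma (sigma : R) : R := sigma * mu_sigma sigma.

(* the derivative of f at x (meaningful when f is differentiable at x) *)
Definition deriv (f : R -> R) (x : R) : R :=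
  epsilon (inhabits 0) (fun l => derivable_pt_lim f x l).

Definition derivable_at (f : R -> R) (x : R) : Prop :=
  exists l, derivable_pt_lim f x l.

Definition cont_within (a b : R) (f : R -> R) (t : R) : Prop :=
  forall eps, 0 < eps -> exists delta, 0 < delta /\
    forall s, a <= s <= b -> Rabs (s - t) < delta -> Rabs (f s - f t) < eps.

Definition has_deriv_within (a b : R) (f : R -> R) (t l : R) : Prop :=
  forall eps, 0 < eps -> exists delta, 0 < delta /\
    forall s, a <= s <= b -> s <> t -> Rabs (s - t) < delta ->
      Rabs ((f s - f t) / (s - t) - l) < eps.

Definition C2_within (a b : R) (f : R -> R) (M : R) : Prop :=
  exists f1 f2 : R -> R, forall s, a <= s <= b ->
    has_deriv_within a b f s (f1 s) /\ has_deriv_within a b f1 s (f2 s) /\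
    cont_within a b f2 s /\ Rabs (f1 s) <= M /\ Rabs (f2 s) <= M.

Definition rlim0 (g : R -> R) (c : R) : Prop :=
  forall eps, 0 < eps -> exists delta, 0 < delta /\
    forall y, 0 < y < delta -> Rabs (g y - c) < eps.

Definition rpow (b p : R) : R := if Rlt_dec 0 b then Rpower b p else 0.

(* ---------- the operator L_sigma v = div (y^{1-sigma} grad v), N = 1 ---------- *)
Definition Lsigma (sigma : R) (v : R -> R -> R) (x y : R) : R :=
  deriv (fun x' => Rpower y (1 - sigma) * deriv (fun x'' => v x'' y) x') x
  + deriv (fun y' => Rpower y' (1 - sigma) * deriv (fun y'' => v x y'') y') y.

Definition pDx (w : R -> R -> R -> R) (x y t : R) : R := deriv (fun s => w s y t) x.
Definition pDxx (w : R -> R -> R -> R) (x y t : R) : R := deriv (fun s => pDx w s y t) x.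
Definition pDy (w : R -> R -> R -> R) (x y t : R) : R := deriv (fun s => w x s t) y.

(* A discrete operator takes the numbers of cells I (in x) and K (in y),
   a grid function v_i^k and returns (L^D v)_i^k. *)
Definition discOp := nat -> nat -> (nat -> nat -> R) -> nat -> nat -> R.

Definition dxI (X : R) (I : nat) : R := 2 * X / INR I.
Definition dyK (Y : R) (K : nat) : R := Y / INR K.
Definition dtJ (T : R) (J : nat) : R := T / INR J.
Definition xnode (X : R) (I i : nat) : R := INR i * dxI X I - X.
Definition ynode (Y : R) (K k : nat) : R := INR k * dyK Y K.
Definition tnode (T : R) (J j : nat) : R := INR j * dtJ T J.

Definition admissible (X Y : R) (I K : nat) : Prop :=
  (0 < I)%nat /\ (0 < K)%nat /\ dyK Y K = dxI X I.

(* L^D has order a: "sufficiently regular" is modelled by an abstract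
   quantitative regularity class Reg v M ("v is regular with regularity
   bounds <= M"); the constant depends on v only through M. *)
Definition disc_order (sigma X Y a : R) (LD : discOp)
  (Reg : (R -> R -> R) -> R -> Prop) : Prop :=
  forall M, exists C, forall v, Reg v M ->
    forall I K, admissible X Y I K ->
    forall i k, (0 < i < I)%nat -> (0 < k < K)%nat ->
      Rabs (LD I K (fun i' k' => v (xnode X I i') (ynode Y K k')) i k
            - Lsigma sigma v (xnode X I i) (ynode Y K k))
      <= C * Rpower (dxI X I) a.

(* local truncation error (tau_j)_i^k  (= the paper's tau_{j-1} with j-1 := j) *)
Definition trunc (sigma m T X Y : R) (LD : discOp) (w : R -> R -> R -> R)
  (I J K j i k : nat) : R :=
  if (Nat.eqb i 0 || Nat.eqb i I || Nat.eqb k K)%bool then 0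
  else if Nat.eqb k 0 then
    nu_sigma sigma * (dtJ T J / Rpower (dxI X I) sigma)
      * (w (xnode X I i) (ynode Y K 1) (tnode T J j)
         - w (xnode X I i) (ynode Y K 0) (tnode T J j))
    + rpow (w (xnode X I i) (ynode Y K 0) (tnode T J j)) (1 / m)
    - rpow (w (xnode X I i) (ynode Y K 0) (tnode T J (S j))) (1 / m)
  else LD I K (fun i' k' => w (xnode X I i') (ynode Y K k') (tnode T J (S j))) i k.

From Stdlib Require Import Reals Lra Lia ClassicalEpsilon.
Open Scope R_scope.

(* At an interior node it is L^D applied to
   the exact solution w(t_{j+1}), and L_sigma w = 0 there, so it is O(dx^a) by the order
   of L^D.  The substance is the base node.  Writing g = y^(1-sigma) w_y for the flux,
   the equation L_sigma w = 0 gives g_y = -y^(1-sigma) w_xx, hence |g(y) - g(0+)| =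
   O(y^(2-sigma)); the dynamic boundary condition identifies mu_sigma g(0+) with u_t,
   first for t > 0 and then at t = 0 by continuity.  Integrating y^(sigma-1) g over
   (0, dx) yields mu_sigma (w(dx) - w(0)) = u_t dx^sigma / sigma + O(dx^2), and with the
   Taylor expansion u(t+dt) = u(t) + dt u_t + O(dt^2) the base-node residual becomes
   O(dt dx^(2-sigma) + dt^2). *)

Lemma deriv_eq f x l : derivable_pt_lim f x l -> deriv f x = l.
Proof.
  intro H. unfold deriv.
  assert (E : exists l, derivable_pt_lim f x l) by (exists l; exact H).
  exact (uniqueness_limite _ _ _ _ (epsilon_spec (inhabits 0) _ E) H).
Qed.

Lemma deriv_spec f x : derivable_at f x -> derivable_pt_lim f x (deriv f x).
Proof. intros [l H]. now rewrite (deriv_eq f x l H). Qed.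

Lemma has_deriv_within_interior a b f s l : a < s < b ->
  has_deriv_within a b f s l -> derivable_pt_lim f s l.
Proof.
  intros Hs H eps Heps. destruct (H eps Heps) as [d [Hd Hd']].
  set (r := Rmin d (Rmin (s - a) (b - s))).
  assert (Hr : 0 < r) by (apply Rmin_pos; [lra | apply Rmin_pos; lra]).
  assert (r1 := Rmin_l d (Rmin (s - a) (b - s))).
  assert (r2 := Rmin_l (s - a) (b - s)). assert (r3 := Rmin_r (s - a) (b - s)).
  assert (r4 := Rmin_r d (Rmin (s - a) (b - s))). fold r in r1, r4.
  exists (mkposreal r Hr). intros h Hh0 Hh. simpl in Hh.
  apply Rabs_def2 in Hh as [Hh1 Hh2].
  specialize (Hd' (s + h)). replace (s + h - s) with h in Hd' by ring.
  apply Hd'; [lra | lra | apply Rabs_def1; lra].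
Qed.

Lemma has_deriv_within_cont a b f t l : has_deriv_within a b f t l -> cont_within a b f t.
Proof.
  intros H eps Heps. destruct (H 1 Rlt_0_1) as [d [Hd Hd']].
  assert (Hl : 0 < Rabs l + 1) by (pose proof (Rabs_pos l); lra).
  set (e := Rmin d (eps / (Rabs l + 1))).
  assert (He : 0 < e) by (apply Rmin_pos; [lra | apply Rdiv_lt_0_compat; lra]).
  exists e. split; [exact He |]. intros s Hs Hst.
  destruct (Req_dec s t) as [-> | Hne]; [now rewrite Rminus_diag, Rabs_R0 |].
  assert (Hsd : Rabs (s - t) < d) by (apply Rlt_le_trans with e; [exact Hst | apply Rmin_l]).
  assert (Hse : Rabs (s - t) < eps / (Rabs l + 1))
    by (apply Rlt_le_trans with e; [exact Hst | apply Rmin_r]).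
  specialize (Hd' s Hs Hne Hsd).
  assert (Hq : Rabs ((f s - f t) / (s - t)) <= Rabs l + 1)
    by (pose proof (Rabs_triang_inv ((f s - f t) / (s - t)) l); lra).
  replace (f s - f t) with ((f s - f t) / (s - t) * (s - t)) by (field; lra).
  rewrite Rabs_mult.
  apply Rle_lt_trans with ((Rabs l + 1) * Rabs (s - t)).
  - apply Rmult_le_compat_r; [apply Rabs_pos | exact Hq].
  - apply Rlt_le_trans with ((Rabs l + 1) * (eps / (Rabs l + 1))).
    + apply Rmult_lt_compat_l; lra.
    + right. field. lra.
Qed.

Lemma has_deriv_within_unique a b f t l1 l2 : a < b -> a <= t <= b ->
  has_deriv_within a b f t l1 -> has_deriv_within a b f t l2 -> l1 = l2.
Proof.
  intros Hab Ht H1 H2.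
  destruct (Req_dec l1 l2) as [| Hne]; [assumption | exfalso].
  set (e := Rabs (l1 - l2) / 2).
  assert (He : 0 < e) by (unfold e; pose proof (Rabs_pos_lt _ (Rminus_eq_contra _ _ Hne)); lra).
  destruct (H1 e He) as [d1 [Hd1 Hd1']]. destruct (H2 e He) as [d2 [Hd2 Hd2']].
  set (d := Rmin (Rmin d1 d2) (b - a)).
  assert (Hd : 0 < d) by (unfold d; repeat apply Rmin_pos; lra).
  assert (k1 := Rmin_l (Rmin d1 d2) (b - a)). assert (k2 := Rmin_r (Rmin d1 d2) (b - a)).
  assert (k3 := Rmin_l d1 d2). assert (k4 := Rmin_r d1 d2). fold d in k1, k2.
  assert (Hs : exists s, a <= s <= b /\ s <> t /\ Rabs (s - t) < d).
  { destruct (Rle_lt_dec (t + d / 2) b).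
    - exists (t + d / 2). split; [lra | split; [lra | apply Rabs_def1; lra]].
    - exists (t - d / 2). split; [lra | split; [lra | apply Rabs_def1; lra]]. }
  destruct Hs as [s [Hs1 [Hs2 Hs3]]].
  specialize (Hd1' s Hs1 Hs2 ltac:(lra)). specialize (Hd2' s Hs1 Hs2 ltac:(lra)).
  set (q := (f s - f t) / (s - t)) in *.
  pose proof (Rabs_triang (q - l2) (l1 - q)).
  replace (q - l2 + (l1 - q)) with (l1 - l2) in H by ring.
  rewrite <- Rabs_Ropp in Hd1'. replace (- (q - l1)) with (l1 - q) in Hd1' by ring.
  unfold e in *. lra.
Qed.

(* With D an open interval (a,b) and dist s = s - a (resp. b - s) this is the
   right limit at a (resp. the left limit at b). *)
Definition approaches (D : R -> Prop) (dist : R -> R) (h : R -> R) (L : R) : Prop :=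
  forall eta, 0 < eta -> exists d, 0 < d /\
    forall s, D s -> dist s < d -> Rabs (h s - L) < eta.

Lemma approaches_lin D dist f g Lf Lg al be :
  approaches D dist f Lf -> approaches D dist g Lg ->
  approaches D dist (fun s => al * f s + be * g s) (al * Lf + be * Lg).
Proof.
  intros Hf Hg eta He.
  set (c := Rabs al + Rabs be + 1).
  pose proof (Rabs_pos al). pose proof (Rabs_pos be).
  assert (Hc : 0 < c) by (unfold c; lra).
  destruct (Hf (eta / c) ltac:(apply Rdiv_lt_0_compat; lra)) as [d1 [Hd1 Hd1']].
  destruct (Hg (eta / c) ltac:(apply Rdiv_lt_0_compat; lra)) as [d2 [Hd2 Hd2']].
  exists (Rmin d1 d2). split; [now apply Rmin_pos |]. intros s Hs Hsd.
  pose proof (Rmin_l d1 d2). pose proof (Rmin_r d1 d2).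
  specialize (Hd1' s Hs ltac:(lra)). specialize (Hd2' s Hs ltac:(lra)).
  replace (al * f s + be * g s - (al * Lf + be * Lg))
    with (al * (f s - Lf) + be * (g s - Lg)) by ring.
  eapply Rle_lt_trans; [apply Rabs_triang |]. rewrite !Rabs_mult.
  assert (Q1 : Rabs al * Rabs (f s - Lf) <= Rabs al * (eta / c))
    by (apply Rmult_le_compat_l; [apply Rabs_pos | lra]).
  assert (Q2 : Rabs be * Rabs (g s - Lg) <= Rabs be * (eta / c))
    by (apply Rmult_le_compat_l; [apply Rabs_pos | lra]).
  assert (E : Rabs al * (eta / c) + Rabs be * (eta / c) = eta - eta / c)
    by (unfold c; field; lra).
  assert (0 < eta / c) by (apply Rdiv_lt_0_compat; lra). lra.
Qed.

Lemma approaches_cont A B D dist f t : cont_within A B f t ->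
  (forall s, D s -> A <= s <= B /\ Rabs (s - t) <= dist s) -> approaches D dist f (f t).
Proof.
  intros Hc HD eta He. destruct (Hc eta He) as [d [Hd Hd']].
  exists d. split; [exact Hd |]. intros s Hs Hsd.
  destruct (HD s Hs). apply Hd'; lra.
Qed.

(* s^p -> 0 as s -> 0+ (p > 0); note that Rpower 0 p is not 0, so this is a genuine limit. *)
Lemma approaches_Rpower_0 p b : 0 < p ->
  approaches (fun s => 0 < s < b) (fun s => s - 0) (fun s => Rpower s p) 0.
Proof.
  intros Hp eta He. exists (Rpower eta (1 / p)). split; [apply exp_pos |].
  intros s Hs Hsd. rewrite Rminus_0_r in *.
  rewrite Rabs_right by (left; apply exp_pos).
  apply Rlt_le_trans with (Rpower (Rpower eta (1 / p)) p).
  - apply Rlt_Rpower_l; lra.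
  - rewrite Rpower_mult. replace (1 / p * p) with 1 by (field; lra). rewrite Rpower_1; lra.
Qed.

Lemma approaches_Rpower_left p a y : 0 <= a < y ->
  approaches (fun s => a < s < y) (fun s => y - s) (fun s => Rpower s p) (Rpower y p).
Proof.
  intros Hy eta He.
  assert (C : continuity_pt (fun r => Rpower r p) y).
  { apply derivable_continuous_pt. exists (p * Rpower y (p - 1)).
    apply derivable_pt_lim_power. lra. }
  destruct (C eta He) as [d [Hd Hd']]. exists d. split; [exact Hd |].
  intros s Hs Hsd. apply (Hd' s). split.
  - split; [exact I | intro; lra].
  - simpl. unfold R_dist. rewrite Rabs_left; lra.
Qed.

Lemma mean_value_bound a b h h' B La Lb : a < b ->
  (forall s, a < s < b -> derivable_pt_lim h s (h' s)) ->
  (forall s, a < s < b -> Rabs (h' s) <= B) ->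
  approaches (fun s => a < s < b) (fun s => s - a) h La ->
  approaches (fun s => a < s < b) (fun s => b - s) h Lb ->
  Rabs (Lb - La) <= B * (b - a).
Proof.
  intros Hab Hd HB Ha Hb.
  assert (B0 : 0 <= B).
  { apply Rle_trans with (Rabs (h' ((a + b) / 2))); [apply Rabs_pos | apply HB; lra]. }
  apply Rle_plus_epsilon. intros eps Heps.
  destruct (Ha (eps / 2) ltac:(lra)) as [d1 [Hd1 Hd1']].
  destruct (Hb (eps / 2) ltac:(lra)) as [d2 [Hd2 Hd2']].
  set (r1 := Rmin d1 ((b - a) / 3)). set (r2 := Rmin d2 ((b - a) / 3)).
  assert (r1p : 0 < r1) by (apply Rmin_pos; lra). assert (r2p : 0 < r2) by (apply Rmin_pos; lra).
  assert (r1a : r1 <= d1) by apply Rmin_l. assert (r1b : r1 <= (b - a) / 3) by apply Rmin_r.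
  assert (r2a : r2 <= d2) by apply Rmin_l. assert (r2b : r2 <= (b - a) / 3) by apply Rmin_r.
  set (a' := a + r1 / 2). set (b' := b - r2 / 2).
  destruct (MVT_cor2 h h' a' b' ltac:(unfold a', b'; lra)) as [c [Hc1 Hc2]].
  { intros c Hc. apply Hd. unfold a', b' in Hc. lra. }
  specialize (Hd1' a' ltac:(unfold a'; lra) ltac:(unfold a'; lra)).
  specialize (Hd2' b' ltac:(unfold b'; lra) ltac:(unfold b'; lra)).
  assert (Hm : Rabs (h b' - h a') <= B * (b - a)).
  { rewrite Hc1, Rabs_mult, (Rabs_right (b' - a')) by (unfold a', b'; lra).
    apply Rle_trans with (B * (b' - a')).
    - apply Rmult_le_compat_r; [unfold a', b'; lra | apply HB; unfold a', b' in Hc2; lra].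
    - apply Rmult_le_compat_l; [lra | unfold a', b'; lra]. }
  replace (Lb - La) with ((h b' - h a') + (Lb - h b') + (h a' - La)) by ring.
  pose proof (Rabs_triang (h b' - h a' + (Lb - h b')) (h a' - La)).
  pose proof (Rabs_triang (h b' - h a') (Lb - h b')).
  rewrite (Rabs_minus_sym Lb) in *. lra.
Qed.

Lemma mean_value_bound_within A B a b h h' M : A <= a -> a < b -> b <= B ->
  (forall s, a <= s <= b -> has_deriv_within A B h s (h' s)) ->
  (forall s, a < s < b -> Rabs (h' s) <= M) -> Rabs (h b - h a) <= M * (b - a).
Proof.
  intros Ha Hab Hb Hd HM. apply (mean_value_bound a b h h' M (h a) (h b)); try assumption.
  - intros s Hs. apply has_deriv_within_interior with A B; [lra | apply Hd; lra].
  - apply approaches_cont with A B; [eapply has_deriv_within_cont, Hd; lra |].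
    intros s Hs. split; [lra | apply Req_le, Rabs_right; lra].
  - apply approaches_cont with A B; [eapply has_deriv_within_cont, Hd; lra |].
    intros s Hs. split; [lra | rewrite Rabs_left; lra].
Qed.

Lemma has_deriv_within_sub_linear a b u s l c : has_deriv_within a b u s l ->
  has_deriv_within a b (fun r => u r - r * c) s (l - c).
Proof.
  intros H eps He. destruct (H eps He) as [d [Hd Hd']]. exists d. split; [exact Hd |].
  intros r Hr Hne Hrd. specialize (Hd' r Hr Hne Hrd).
  replace ((u r - r * c - (u s - s * c)) / (r - s) - (l - c))
    with ((u r - u s) / (r - s) - l) by (field; lra). exact Hd'.
Qed.

Lemma taylor_bound u u1 u2 M T t D : 0 <= t -> 0 < D -> t + D <= T ->
  (forall s, 0 <= s <= T -> has_deriv_within 0 T u s (u1 s) /\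
     has_deriv_within 0 T u1 s (u2 s) /\ Rabs (u2 s) <= M) ->
  Rabs (u (t + D) - u t - D * u1 t) <= M * D ^ 2.
Proof.
  intros Ht HD HtT H.
  assert (HM : 0 <= M) by (apply Rle_trans with (Rabs (u2 t)); [apply Rabs_pos | apply H; lra]).
  (* u1 is M-Lipschitz, so u - r * u1 t has derivative bounded by M * D on [t, t+D] *)
  assert (Lip : forall s, t < s < t + D -> Rabs (u1 s - u1 t) <= M * (s - t)).
  { intros s Hs. apply mean_value_bound_within with 0 T u2; try lra.
    - intros r Hr. apply H; lra.
    - intros r Hr. apply H; lra. }
  replace (u (t + D) - u t - D * u1 t)
    with ((u (t + D) - (t + D) * u1 t) - (u t - t * u1 t)) by ring.
  replace (M * D ^ 2) with ((M * D) * ((t + D) - t)) by ring.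
  apply (mean_value_bound_within 0 T t (t + D) (fun r => u r - r * u1 t)
           (fun r => u1 r - u1 t)); try lra.
  - intros r Hr. apply has_deriv_within_sub_linear. apply H; lra.
  - intros r Hr. apply Rle_trans with (M * (r - t)); [apply Lip; lra |].
    apply Rmult_le_compat_l; lra.
Qed.

Lemma cont_within_scal a b f t k : cont_within a b f t -> cont_within a b (fun r => k * f r) t.
Proof.
  intros C eps He. set (c := Rabs k + 1).
  assert (cp : 0 < c) by (unfold c; pose proof (Rabs_pos k); lra).
  destruct (C (eps / c) ltac:(apply Rdiv_lt_0_compat; lra)) as [d [Hd Hd']].
  exists d. split; [exact Hd |]. intros s Hs Hsd. specialize (Hd' s Hs Hsd).
  rewrite <- Rmult_minus_distr_l, Rabs_mult.
  apply Rle_lt_trans with (Rabs k * (eps / c)).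
  { apply Rmult_le_compat_l; [apply Rabs_pos | lra]. }
  apply Rlt_le_trans with (c * (eps / c)).
  { apply Rmult_lt_compat_r; [apply Rdiv_lt_0_compat; lra | unfold c; lra]. }
  right. field. lra.
Qed.

Lemma cont_within_bound_at_0 (A B : R -> R) E T : 0 < T ->
  cont_within 0 T A 0 -> cont_within 0 T B 0 ->
  (forall t, 0 < t <= T -> Rabs (A t - B t) <= E) -> Rabs (A 0 - B 0) <= E.
Proof.
  intros HT CA CB H. apply Rle_plus_epsilon. intros eps He.
  destruct (CA (eps / 2) ltac:(lra)) as [d1 [Hd1 Hd1']].
  destruct (CB (eps / 2) ltac:(lra)) as [d2 [Hd2 Hd2']].
  set (t := Rmin (Rmin d1 d2) T / 2).
  assert (tp : 0 < Rmin (Rmin d1 d2) T) by (repeat apply Rmin_pos; lra).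
  pose proof (Rmin_l (Rmin d1 d2) T). pose proof (Rmin_r (Rmin d1 d2) T).
  pose proof (Rmin_l d1 d2). pose proof (Rmin_r d1 d2).
  assert (Ht : 0 < t <= T) by (unfold t; lra).
  assert (Ha : Rabs (t - 0) < d1) by (rewrite Rminus_0_r, Rabs_right; unfold t; lra).
  assert (Hb : Rabs (t - 0) < d2) by (rewrite Rminus_0_r, Rabs_right; unfold t; lra).
  specialize (Hd1' t ltac:(lra) Ha). specialize (Hd2' t ltac:(lra) Hb).
  specialize (H t Ht).
  replace (A 0 - B 0) with ((A t - B t) + (A 0 - A t) + (B t - B 0)) by ring.
  pose proof (Rabs_triang (A t - B t + (A 0 - A t)) (B t - B 0)).
  pose proof (Rabs_triang (A t - B t) (A 0 - A t)).
  rewrite (Rabs_minus_sym (A 0)) in *. lra.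
Qed.

Lemma deriv_domination g g' p p' e s : e < s ->
  (forall r, e <= r <= s -> derivable_pt_lim g r (g' r)) ->
  (forall r, e <= r <= s -> derivable_pt_lim p r (p' r)) ->
  (forall r, e < r < s -> Rabs (g' r) <= p' r) ->
  Rabs (g s - g e) <= p s - p e.
Proof.
  intros Hes Hg Hp Hb.
  destruct (MVT_cor2 (fun r => g r - p r) (fun r => g' r - p' r) e s Hes) as [c1 [E1 Hc1]].
  { intros r Hr. apply derivable_pt_lim_minus; auto. }
  destruct (MVT_cor2 (fun r => g r + p r) (fun r => g' r + p' r) e s Hes) as [c2 [E2 Hc2]].
  { intros r Hr. apply derivable_pt_lim_plus; auto. }
  pose proof (Hb c1 Hc1) as B1. pose proof (Hb c2 Hc2) as B2.
  pose proof (Rle_abs (g' c1)). pose proof (Rle_abs (- g' c2)). rewrite Rabs_Ropp in *.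
  assert (N1 : (g' c1 - p' c1) * (s - e) <= 0)
    by (assert (0 <= (p' c1 - g' c1) * (s - e)) by (apply Rmult_le_pos; lra); lra).
  assert (N2 : 0 <= (g' c2 + p' c2) * (s - e)) by (apply Rmult_le_pos; lra).
  apply Rabs_le. lra.
Qed.

Lemma weighted_limit_bound g g' c Mb Y q s : 0 < q -> 0 <= Mb ->
  (forall y, 0 < y < Y -> derivable_pt_lim g y (g' y)) ->
  (forall y, 0 < y < Y -> Rabs (g' y) <= Mb * Rpower y (q - 1)) ->
  rlim0 g c -> 0 < s < Y ->
  Rabs (g s - c) <= Mb / q * Rpower s q.
Proof.
  intros Hq HM Hd Hb Hl Hs.
  set (p := fun r => Mb / q * Rpower r q).
  assert (Hp : forall r, 0 < r ->
    derivable_pt_lim p r (Mb * Rpower r (q - 1))).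
  { intros r Hr. replace (Mb * Rpower r (q - 1)) with (Mb / q * (q * Rpower r (q - 1)))
      by (field; lra).
    apply derivable_pt_lim_scal, derivable_pt_lim_power, Hr. }
  assert (Hp0 : forall r, 0 <= p r).
  { intro r. unfold p. apply Rmult_le_pos; [| left; apply exp_pos].
    apply Rmult_le_pos; [lra | left; apply Rinv_0_lt_compat; lra]. }
  apply Rle_plus_epsilon. intros eps He. destruct (Hl eps He) as [d [Hd0 Hd1]].
  set (e := Rmin d s / 2).
  pose proof (Rmin_l d s). pose proof (Rmin_r d s). pose proof (Rmin_pos d s Hd0 ltac:(lra)).
  specialize (Hd1 e ltac:(unfold e; lra)).
  assert (Dom : Rabs (g s - g e) <= p s - p e).
  { apply deriv_domination with g' (fun r => Mb * Rpower r (q - 1)); [unfold e; lra | | |].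
    - intros r Hr. apply Hd. unfold e in Hr. lra.
    - intros r Hr. apply Hp. unfold e in Hr. lra.
    - intros r Hr. apply Hb. unfold e in Hr. lra. }
  pose proof (Rabs_triang (g s - g e) (g e - c)).
  replace (g s - g e + (g e - c)) with (g s - c) in H2 by ring.
  pose proof (Hp0 e). fold (p s). lra.
Qed.

Lemma integrated_flux_bound (W wy : R -> R) mu F A sigma Y y1 :
  0 < sigma < 2 -> 0 <= A -> 0 < y1 <= Y ->
  (forall s, 0 < s < Y -> derivable_pt_lim W s (wy s)) ->
  (forall s, 0 < s < Y ->
     Rabs (mu * (Rpower s (1 - sigma) * wy s) - F) <= A * Rpower s (2 - sigma)) ->
  cont_within 0 Y W 0 -> cont_within 0 Y W y1 ->
  Rabs (mu * (W y1 - W 0) - F * Rpower y1 sigma / sigma) <= A * y1 ^ 2.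
Proof.
  intros Hs HA Hy Hd Hb C0 C1.
  set (k := - (F / sigma)).
  set (h := fun s => mu * W s + k * Rpower s sigma).
  replace (mu * (W y1 - W 0) - F * Rpower y1 sigma / sigma)
    with ((mu * W y1 + k * Rpower y1 sigma) - (mu * W 0 + k * 0)) by (unfold k; field; lra).
  replace (A * y1 ^ 2) with ((A * y1) * (y1 - 0)) by ring.
  apply (mean_value_bound 0 y1 h (fun s => mu * wy s + k * (sigma * Rpower s (sigma - 1))));
    try lra.
  - intros s Hs'. unfold h.
    apply derivable_pt_lim_plus; apply derivable_pt_lim_scal;
      [apply Hd | apply derivable_pt_lim_power]; lra.
  - intros s Hs'.
    assert (E : mu * wy s + k * (sigma * Rpower s (sigma - 1)) =
       Rpower s (sigma - 1) * (mu * (Rpower s (1 - sigma) * wy s) - F)).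
    { unfold k. rewrite Rmult_minus_distr_l.
      replace (Rpower s (sigma - 1) * (mu * (Rpower s (1 - sigma) * wy s)))
        with (mu * wy s * (Rpower s (sigma - 1) * Rpower s (1 - sigma))) by ring.
      rewrite <- Rpower_plus. replace (sigma - 1 + (1 - sigma)) with 0 by ring.
      rewrite Rpower_O by lra. field. lra. }
    rewrite E, Rabs_mult, (Rabs_right (Rpower s (sigma - 1))) by (left; apply exp_pos).
    apply Rle_trans with (Rpower s (sigma - 1) * (A * Rpower s (2 - sigma))).
    + apply Rmult_le_compat_l; [left; apply exp_pos | apply Hb; lra].
    + replace (Rpower s (sigma - 1) * (A * Rpower s (2 - sigma)))
        with (A * (Rpower s (sigma - 1) * Rpower s (2 - sigma))) by ring.
      rewrite <- Rpower_plus. replace (sigma - 1 + (2 - sigma)) with 1 by ring.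
      rewrite Rpower_1 by lra. apply Rmult_le_compat_l; lra.
  - apply approaches_lin; [| apply approaches_Rpower_0; lra].
    apply approaches_cont with 0 Y; [exact C0 |].
    intros s Hs'. split; [lra | apply Req_le; rewrite !Rminus_0_r; apply Rabs_right; lra].
  - apply approaches_lin; [| apply approaches_Rpower_left; lra].
    apply approaches_cont with 0 Y; [exact C1 |].
    intros s Hs'. split; [lra | rewrite Rabs_left; lra].
Qed.

(* The constant of the boundary-layer estimates, Mb bounding |w_xx|. *)
Definition layer_const (sigma Mb : R) : R := Rabs (mu_sigma sigma) * (Mb / (2 - sigma)).

(* Behaviour near y = 0 of a solution w of (P_Omega).  The trace w(x,0,t)^(1/m) is
   abstracted as a function u x t satisfying the dynamic boundary condition. *)
Section BoundaryLayer.

Variables (sigma T X Y Mb : R) (w : R -> R -> R -> R) (u : R -> R -> R).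

Hypothesis Hsig : 0 < sigma < 2.
Hypothesis HT : 0 < T.
Hypothesis HMb0 : 0 <= Mb.
Hypothesis Hdxx : forall x y t, -X < x < X -> 0 < y < Y -> 0 <= t <= T ->
  derivable_at (fun s => pDx w s y t) x.
Hypothesis HMb : forall x y t, -X < x < X -> 0 < y < Y -> 0 <= t <= T ->
  Rabs (pDxx w x y t) <= Mb.
Hypothesis Hdy : forall x y t, -X <= x <= X -> 0 < y < Y -> 0 <= t <= T ->
  derivable_at (fun s => w x s t) y.
Hypothesis Hconty : forall x t, -X < x < X -> 0 <= t <= T ->
  forall y, 0 <= y <= Y -> cont_within 0 Y (fun s => w x s t) y.
Hypothesis Hcontt : forall x y, -X < x < X -> 0 < y < Y ->
  forall t, 0 <= t <= T -> cont_within 0 T (fun s => pDy w x y s) t.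
Hypothesis Heq : forall x y t, -X < x < X -> 0 < y < Y -> 0 < t <= T ->
  derivable_at (fun s => Rpower s (1 - sigma) * pDy w x s t) y /\
  Lsigma sigma (fun x' y' => w x' y' t) x y = 0.
Hypothesis Hbc : forall x t, -X <= x <= X -> 0 < t <= T ->
  exists c, rlim0 (fun y => Rpower y (1 - sigma) * pDy w x y t) c /\
    has_deriv_within 0 T (u x) t (mu_sigma sigma * c).

Lemma layer_const_nonneg : 0 <= layer_const sigma Mb.
Proof.
  apply Rmult_le_pos; [apply Rabs_pos |].
  apply Rmult_le_pos; [lra | left; apply Rinv_0_lt_compat; lra].
Qed.

Lemma flux_derivative x y t : -X < x < X -> 0 < y < Y -> 0 < t <= T ->
  derivable_pt_lim (fun s => Rpower s (1 - sigma) * pDy w x s t) y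
    (- (Rpower y (1 - sigma) * pDxx w x y t)).
Proof.
  intros Hx Hy Ht. destruct (Heq x y t Hx Hy Ht) as [Hd HL].
  assert (Exx : deriv (fun x' => Rpower y (1 - sigma) * pDx w x' y t) x
                = Rpower y (1 - sigma) * pDxx w x y t).
  { apply deriv_eq, derivable_pt_lim_scal, deriv_spec, Hdxx; lra. }
  change (deriv (fun x' => Rpower y (1 - sigma) * pDx w x' y t) x
          + deriv (fun s => Rpower s (1 - sigma) * pDy w x s t) y = 0) in HL.
  rewrite Exx in HL.
  replace (- (Rpower y (1 - sigma) * pDxx w x y t))
    with (deriv (fun s => Rpower s (1 - sigma) * pDy w x s t) y) by lra.
  now apply deriv_spec.
Qed.

Lemma flux_deviation_pos x t u1 s : -X < x < X -> 0 < t <= T ->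
  has_deriv_within 0 T (u x) t u1 -> 0 < s < Y ->
  Rabs (mu_sigma sigma * (Rpower s (1 - sigma) * pDy w x s t) - u1)
    <= layer_const sigma Mb * Rpower s (2 - sigma).
Proof.
  intros Hx Ht Hu Hs. destruct (Hbc x t ltac:(lra) Ht) as [c [Hc Hcu]].
  replace u1 with (mu_sigma sigma * c) by (eapply has_deriv_within_unique; eauto; lra).
  rewrite <- Rmult_minus_distr_l, Rabs_mult. unfold layer_const. rewrite Rmult_assoc.
  apply Rmult_le_compat_l; [apply Rabs_pos |].
  apply (weighted_limit_bound (fun y => Rpower y (1 - sigma) * pDy w x y t)
           (fun y => - (Rpower y (1 - sigma) * pDxx w x y t)) c Mb Y (2 - sigma) s);
    try lra.
  - intros y Hy. now apply flux_derivative.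
  - intros y Hy. replace (2 - sigma - 1) with (1 - sigma) by ring.
    rewrite Rabs_Ropp, Rabs_mult, (Rabs_right (Rpower y (1 - sigma))) by (left; apply exp_pos).
    rewrite (Rmult_comm Mb). apply Rmult_le_compat_l; [left; apply exp_pos | apply HMb; lra].
  - exact Hc.
Qed.

(* The same estimate at t = 0, by continuity of w_y and of u_t in time. *)
Lemma flux_deviation x u1 : -X < x < X ->
  (forall t, 0 < t <= T -> has_deriv_within 0 T (u x) t (u1 t)) ->
  cont_within 0 T u1 0 ->
  forall t, 0 <= t <= T -> forall s, 0 < s < Y ->
  Rabs (mu_sigma sigma * (Rpower s (1 - sigma) * pDy w x s t) - u1 t)
    <= layer_const sigma Mb * Rpower s (2 - sigma).
Proof.
  intros Hx Hu Hu1 t Ht s Hs. destruct (Rlt_dec 0 t) as [Hpos | Hzero].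
  { apply flux_deviation_pos; [exact Hx | lra | apply Hu; lra | exact Hs]. }
  replace t with 0 by lra.
  apply (cont_within_bound_at_0
           (fun t => mu_sigma sigma * (Rpower s (1 - sigma) * pDy w x s t)) u1 _ T); auto.
  - do 2 apply cont_within_scal. apply Hcontt; lra.
  - intros t' Ht'. apply flux_deviation_pos; auto.
Qed.

Lemma boundary_layer_expansion x u1 : -X < x < X ->
  (forall t, 0 < t <= T -> has_deriv_within 0 T (u x) t (u1 t)) ->
  cont_within 0 T u1 0 ->
  forall t, 0 <= t <= T -> forall y1, 0 < y1 <= Y ->
  Rabs (mu_sigma sigma * (w x y1 t - w x 0 t) - u1 t * Rpower y1 sigma / sigma)
    <= layer_const sigma Mb * y1 ^ 2.
Proof.
  intros Hx Hu Hu1 t Ht y1 Hy1.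
  apply (integrated_flux_bound (fun s => w x s t) (fun s => pDy w x s t)
           _ _ _ sigma Y); auto using layer_const_nonneg.
  - intros s Hs. apply deriv_spec, Hdy; lra.
  - intros s Hs. now apply flux_deviation.
  - apply Hconty; lra.
  - apply Hconty; lra.
Qed.

Lemma base_node_consistency x Mu : -X < x < X -> C2_within 0 T (u x) Mu ->
  forall t dt y1, 0 <= t -> 0 < dt -> t + dt <= T -> 0 < y1 <= Y ->
  Rabs (nu_sigma sigma * (dt / Rpower y1 sigma) * (w x y1 t - w x 0 t)
        + u x t - u x (t + dt))
  <= sigma * layer_const sigma Mb * dt * Rpower y1 (2 - sigma) + Mu * dt ^ 2.
Proof.
  intros Hx [u1 [u2 Hu]] t dt y1 Ht Hdt HtT Hy1.
  assert (Space := boundary_layer_expansion x u1 Hx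
    ltac:(intros s Hs; apply Hu; lra)
    ltac:(apply has_deriv_within_cont with (u2 0), Hu; lra) t ltac:(lra) y1 Hy1).
  assert (Time : Rabs (u x (t + dt) - u x t - dt * u1 t) <= Mu * dt ^ 2).
  { apply (taylor_bound _ u1 u2 Mu T); try lra.
    intros s Hs. destruct (Hu s Hs) as [? [? [? [? ?]]]]. auto. }
  set (D := mu_sigma sigma * (w x y1 t - w x 0 t) - u1 t * Rpower y1 sigma / sigma) in *.
  assert (Py : 0 < Rpower y1 sigma) by apply exp_pos.
  assert (Hw : 0 < dt * sigma / Rpower y1 sigma)
    by (apply Rdiv_lt_0_compat; [apply Rmult_lt_0_compat |]; lra).
  (* split the residual into the spatial and the temporal consistency errors *)
  replace (nu_sigma sigma * (dt / Rpower y1 sigma) * (w x y1 t - w x 0 t) + u x t - u x (t + dt))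
    with (dt * sigma / Rpower y1 sigma * D - (u x (t + dt) - u x t - dt * u1 t))
    by (unfold D, nu_sigma; field; lra).
  assert (Epow : y1 ^ 2 / Rpower y1 sigma = Rpower y1 (2 - sigma)).
  { rewrite <- (Rpower_pow 2 y1) by lra.
    replace (INR 2) with ((2 - sigma) + sigma) by (simpl; ring).
    rewrite Rpower_plus. field. lra. }
  assert (SpaceW : Rabs (dt * sigma / Rpower y1 sigma * D)
                   <= sigma * layer_const sigma Mb * dt * Rpower y1 (2 - sigma)).
  { rewrite Rabs_mult, (Rabs_right _ (Rgt_ge _ _ Hw)), <- Epow.
    apply Rle_trans with (dt * sigma / Rpower y1 sigma * (layer_const sigma Mb * y1 ^ 2)).
    - apply Rmult_le_compat_l; lra.
    - right. field. lra. }
  eapply Rle_trans; [apply Rabs_triang |]. rewrite Rabs_Ropp. lra.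
Qed.

End BoundaryLayer.

Lemma dx_pos X I : 0 < X -> (0 < I)%nat -> 0 < dxI X I.
Proof. intros HX HI. apply lt_0_INR in HI. unfold dxI. apply Rdiv_lt_0_compat; lra. Qed.

Lemma dt_pos T J : 0 < T -> (0 < J)%nat -> 0 < dtJ T J.
Proof. intros HT HJ. apply lt_0_INR in HJ. unfold dtJ. apply Rdiv_lt_0_compat; lra. Qed.

Lemma dx_le_Y X Y I K : 0 < Y -> admissible X Y I K -> dxI X I <= Y.
Proof.
  intros HY [_ [HK <-]]. apply (le_INR 1) in HK. unfold dyK. simpl in HK.
  apply Rmult_le_reg_r with (INR K); [lra |].
  unfold Rdiv. rewrite Rmult_assoc, Rinv_l by lra. nra.
Qed.

Lemma xnode_interior X I i : 0 < X -> (0 < i < I)%nat -> -X < xnode X I i < X.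
Proof.
  intros HX [Hi HiI]. apply lt_INR in HiI. apply lt_0_INR in Hi.
  unfold xnode, dxI.
  assert (E : INR i * (2 * X / INR I) = 2 * X * (INR i / INR I)) by (field; lra).
  assert (Q1 : 0 < INR i / INR I) by (apply Rdiv_lt_0_compat; lra).
  assert (Q2 : INR i / INR I < 1) by (apply Rmult_lt_reg_r with (INR I); [lra |];
    unfold Rdiv; rewrite Rmult_assoc, Rinv_l; lra).
  rewrite E. split; nra.
Qed.

Lemma ynode_interior Y K k : 0 < Y -> (0 < k < K)%nat -> 0 < ynode Y K k < Y.
Proof.
  intros HY [Hk HkK]. apply lt_INR in HkK. apply lt_0_INR in Hk.
  unfold ynode, dyK.
  assert (E : INR k * (Y / INR K) = Y * (INR k / INR K)) by (field; lra).
  assert (Q1 : 0 < INR k / INR K) by (apply Rdiv_lt_0_compat; lra).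
  assert (Q2 : INR k / INR K < 1) by (apply Rmult_lt_reg_r with (INR K); [lra |];
    unfold Rdiv; rewrite Rmult_assoc, Rinv_l; lra).
  rewrite E. split; nra.
Qed.

Lemma ynode_0 Y K : ynode Y K 0 = 0.
Proof. unfold ynode. simpl. ring. Qed.

Lemma ynode_1 X Y I K : admissible X Y I K -> ynode Y K 1 = dxI X I.
Proof. intros [_ [_ Hd]]. unfold ynode. simpl. rewrite Hd. ring. Qed.

Lemma tnode_step T J j : tnode T J (S j) = tnode T J j + dtJ T J.
Proof. unfold tnode. rewrite S_INR. ring. Qed.

Lemma tnode_range T J j : 0 < T -> (j < J)%nat ->
  0 <= tnode T J j /\ tnode T J j + dtJ T J <= T.
Proof.
  intros HT Hj. assert (HJ : 0 < INR J) by (apply lt_0_INR; lia).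
  apply le_INR in Hj. rewrite S_INR in Hj.
  unfold tnode, dtJ. split.
  - apply Rmult_le_pos; [apply pos_INR | left; apply Rdiv_lt_0_compat; lra].
  - apply Rmult_le_reg_r with (INR J); [lra |].
    replace ((INR j * (T / INR J) + T / INR J) * INR J) with ((INR j + 1) * T) by (field; lra).
    nra.
Qed.

Lemma trunc_bound_by_cases sigma m T X Y LD w I J K j E : 0 <= E ->
  (forall i, (0 < i < I)%nat ->
     Rabs (nu_sigma sigma * (dtJ T J / Rpower (dxI X I) sigma)
             * (w (xnode X I i) (ynode Y K 1) (tnode T J j)
                - w (xnode X I i) (ynode Y K 0) (tnode T J j))
           + rpow (w (xnode X I i) (ynode Y K 0) (tnode T J j)) (1 / m)
           - rpow (w (xnode X I i) (ynode Y K 0) (tnode T J (S j))) (1 / m)) <= E) ->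
  (forall i k, (0 < i < I)%nat -> (0 < k < K)%nat ->
     Rabs (LD I K (fun i' k' => w (xnode X I i') (ynode Y K k') (tnode T J (S j))) i k)
       <= E) ->
  forall i k, (i <= I)%nat -> (k <= K)%nat -> Rabs (trunc sigma m T X Y LD w I J K j i k) <= E.
Proof.
  intros HE Hbase Hint i k Hi Hk. unfold trunc.
  destruct (Nat.eqb i 0 || Nat.eqb i I || Nat.eqb k K)%bool eqn:Eh.
  { now rewrite Rabs_R0. }
  apply Bool.orb_false_iff in Eh as [Eh Ek]. apply Bool.orb_false_iff in Eh as [Ei0 EiI].
  apply Nat.eqb_neq in Ei0, EiI, Ek.
  destruct (Nat.eqb k 0) eqn:Ek0.
  - apply Nat.eqb_eq in Ek0. subst k. apply Hbase. lia.
  - apply Nat.eqb_neq in Ek0. apply Hint; lia.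
Qed.

Lemma interior_node_bound sigma X Y a LD (Reg : (R -> R -> R) -> R -> Prop) Mr CLD v I K i k :
  (forall v, Reg v Mr -> forall I K, admissible X Y I K ->
    forall i k, (0 < i < I)%nat -> (0 < k < K)%nat ->
      Rabs (LD I K (fun i' k' => v (xnode X I i') (ynode Y K k')) i k
            - Lsigma sigma v (xnode X I i) (ynode Y K k))
      <= CLD * Rpower (dxI X I) a) ->
  Reg v Mr -> admissible X Y I K -> (0 < i < I)%nat -> (0 < k < K)%nat ->
  Lsigma sigma v (xnode X I i) (ynode Y K k) = 0 ->
  Rabs (LD I K (fun i' k' => v (xnode X I i') (ynode Y K k')) i k)
    <= CLD * Rpower (dxI X I) a.
Proof.
  intros HLD Hv Hadm Hi Hk Hsol.
  rewrite <- (Rminus_0_r (LD _ _ _ _ _)), <- Hsol. now apply HLD.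
Qed.

Lemma error_budget cI sA cM dt P Q : 0 <= sA -> 0 <= dt -> 0 <= P -> 0 <= Q ->
  0 <= (Rabs cI + sA + Rabs cM) * (dt * (P + dt) + Q) /\
  sA * dt * P + cM * dt ^ 2 <= (Rabs cI + sA + Rabs cM) * (dt * (P + dt) + Q) /\
  cI * Q <= (Rabs cI + sA + Rabs cM) * (dt * (P + dt) + Q).
Proof.
  intros HsA Hdt HP HQ.
  pose proof (Rle_abs cI). pose proof (Rle_abs cM).
  pose proof (Rabs_pos cI). pose proof (Rabs_pos cM).
  assert (0 <= dt * P) by nra. assert (0 <= dt * dt) by nra.
  repeat split; simpl; nra.
Qed.

Theorem theorem4p1
  (m sigma T X Y a : R) (f : R -> R) (w : R -> R -> R -> R)
  (LD : discOp) (Reg : (R -> R -> R) -> R -> Prop)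
  (Hm : 1 <= m) (Hsig : 0 < sigma < 2) (HT : 0 < T) (HX : 0 < X) (HY : 0 < Y)
  (* data f >= 0, bounded *)
  (Hf0 : forall x, 0 <= f x) (HfInf : exists B, forall x, Rabs (f x) <= B)
  (* w >= 0 on the closed domain (so that w^{1/m} makes sense) *)
  (Hwnn : forall x y t, -X <= x <= X -> 0 <= y <= Y -> 0 <= t <= T -> 0 <= w x y t)
  (* regularity of w *)
  (Hdiff : forall x y t, -X < x < X -> 0 < y < Y -> 0 <= t <= T ->
      derivable_at (fun s => w s y t) x /\ derivable_at (fun s => pDx w s y t) x)
  (Hdiffy : forall x y t, -X <= x <= X -> 0 < y < Y -> 0 <= t <= T ->
      derivable_at (fun s => w x s t) y)
  (Hbnd : exists M, forall x y t, -X < x < X -> 0 < y < Y -> 0 <= t <= T ->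
      Rabs (w x y t) <= M /\ Rabs (pDx w x y t) <= M /\ Rabs (pDxx w x y t) <= M)
  (Hconty : forall x t, -X < x < X -> 0 <= t <= T ->
      forall y, 0 <= y <= Y -> cont_within 0 Y (fun s => w x s t) y)
  (Hcontt : forall x y, -X < x < X -> 0 < y < Y ->
      forall t, 0 <= t <= T -> cont_within 0 T (fun s => pDy w x y s) t)
  (HReg : exists M, forall t, 0 <= t <= T -> Reg (fun x y => w x y t) M)
  (* u = w^{1/m}|_{y=0} is C^2 in t, u^m is C^2 in x, bounded derivatives *)
  (Hut : exists M, forall x, -X <= x <= X ->
      C2_within 0 T (fun s => rpow (w x 0 s) (1 / m)) M)
  (Humx : exists M, forall t, 0 <= t <= T ->
      C2_within (-X) X (fun s => rpow (rpow (w s 0 t) (1 / m)) m) M)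
  (* (P_Omega): L_sigma w = 0 in Omega x (0,T] *)
  (Heq : forall x y t, -X < x < X -> 0 < y < Y -> 0 < t <= T ->
      derivable_at (fun s => Rpower s (1 - sigma) * pDy w x s t) y /\
      Lsigma sigma (fun x' y' => w x' y' t) x y = 0)
  (* dynamic boundary condition on Gamma_d x (0,T] *)
  (Hbc : forall x t, -X <= x <= X -> 0 < t <= T ->
      exists c, rlim0 (fun y => Rpower y (1 - sigma) * pDy w x y t) c /\
        has_deriv_within 0 T (fun s => rpow (w x 0 s) (1 / m)) t (mu_sigma sigma * c))
  (* initial condition *)
  (Hic : forall x, -X <= x <= X -> w x 0 0 = rpow (f x) m)
  (* homogeneous Dirichlet condition on Gamma_h *)
  (Hgh : forall x y t, 0 < t <= T ->
      (((x = -X \/ x = X) /\ 0 < y <= Y) \/ (-X <= x <= X /\ y = Y)) -> w x y t = 0)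
  (* L^D is a discretization of L_sigma of order a *)
  (HLD : disc_order sigma X Y a LD Reg) :
  exists C, forall I J K : nat, admissible X Y I K -> (0 < J)%nat ->
    forall j i k, (j < J)%nat -> (i <= I)%nat -> (k <= K)%nat ->
      Rabs (trunc sigma m T X Y LD w I J K j i k)
      <= C * (dtJ T J * (Rpower (dxI X I) (2 - sigma) + dtJ T J)
              + Rpower (dxI X I) a).
Proof.
  destruct Hbnd as [Mb0 HMb], Hut as [Mu HMu], HReg as [Mr HMr].
  destruct (HLD Mr) as [CLD HCLD].
  set (Mb := Rabs Mb0). set (A := layer_const sigma Mb).
  assert (HA : 0 <= A) by (apply layer_const_nonneg; [lra | apply Rabs_pos]).
  assert (Hdxx : forall x y t, -X < x < X -> 0 < y < Y -> 0 <= t <= T ->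
    derivable_at (fun s => pDx w s y t) x) by (intros; now apply Hdiff).
  assert (Hwxx : forall x y t, -X < x < X -> 0 < y < Y -> 0 <= t <= T ->
    Rabs (pDxx w x y t) <= Mb) by (intros; eapply Rle_trans; [apply HMb | apply Rle_abs]; auto).
  exists (Rabs CLD + sigma * A + Rabs Mu).
  intros I J K Hadm HJ j i k Hj Hi Hk.
  pose proof (dx_pos X I HX (proj1 Hadm)) as Hdx. pose proof (dt_pos T J HT HJ) as Hdt.
  destruct (tnode_range T J j HT Hj) as [Ht0 HtT].
  destruct (error_budget CLD (sigma * A) Mu (dtJ T J) (Rpower (dxI X I) (2 - sigma))
              (Rpower (dxI X I) a) ltac:(nra) (Rlt_le _ _ Hdt)
              ltac:(left; apply exp_pos) ltac:(left; apply exp_pos)) as [E0 [Ebase Eint]].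
  apply trunc_bound_by_cases;
    [exact E0 | intros i' Hi' | intros i' k' Hi' Hk' | exact Hi | exact Hk];
    rewrite ?(tnode_step T J j).
  -
    pose proof (xnode_interior X I i' HX Hi') as Hx.
    rewrite ynode_0, (ynode_1 X Y I K Hadm).
    eapply Rle_trans; [| exact Ebase].
    apply (base_node_consistency sigma T X Y Mb w (fun x s => rpow (w x 0 s) (1 / m))
             Hsig HT (Rabs_pos Mb0) Hdxx Hwxx Hdiffy Hconty Hcontt Heq Hbc); try lra.
    + apply HMu. lra.
    + split; [lra | now apply (dx_le_Y X Y I K)].
  -
    eapply Rle_trans; [| exact Eint].
    apply (interior_node_bound sigma X Y a LD Reg Mr CLD
             (fun x y => w x y (tnode T J j + dtJ T J))); auto.
    + apply HMr. lra.
    + apply Heq; [apply xnode_interior | apply ynode_interior | ]; auto; lra.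
Qed.
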